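(* For every $k$-hyperdigraph $H$, $pc(H)\le \alpha(H)$.
   Context: For $2\le k\le n$, a $k$-hyperdigraph $H$ on $n$ vertices is a pair $(V,A)$ where $V$ is a set of $n$ vertices and $A$ is a set of $k$-tuples of distinct vertices (hyperarcs) such that for each $k$-subset $S\subseteq V$, $A$ contains at most one of the $k!$ orderings of $S$. For a hyperarc $a=(x_1\dots x_k)$, $x_i$ precedes $x_j$ in $a$ if $i<j$. A path is an alternating sequence $x_1a_1x_2\dots x_ma_mx_{m+1}$ ($m\ge 0$) of distinct vertices and distinct hyperarcs with $x_i$ preceding $x_{i+1}$ in $a_i$. The path covering number $pc(H)$ is the minimum number of vertex-disjoint paths (using distinct hyperarcs) covering $V$. A set $I\subseteq V$ is independent if no hyperarc of $H$ has all its vertices in $I$; the independence number $\alpha(H)$ is the maximum size of an independent set. *)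

From mathcomp Require Import all_boot.
Set Implicit Arguments. Unset Strict Implicit. Unset Printing Implicit Defensive.

Section Hyperdigraph.
Variables (V : finType) (k : nat).

Definition khyperdigraph (A : {set k.-tuple V}) : Prop :=
  [/\ 2 <= k, k <= #|V|,
      (forall a, a \in A -> uniq a) &
      (forall a b, a \in A -> b \in A -> [set x in a] = [set x in b] -> a = b)].

Definition precedes (a : k.-tuple V) (x y : V) : bool :=
  [&& x \in a, y \in a & index x a < index y a].

(* [:: x_1; ...; x_(m+1)] and [:: a_1; ...; a_m] form a chain with x_i
   preceding x_(i+1) in a_i (in particular m+1 vertices, m arcs). *)
Fixpoint chain (xs : seq V) (arcs : seq (k.-tuple V)) : bool :=
  match xs, arcs with
  | [:: x], [::] => true
  | x :: ((y :: _) as xs'), a :: arcs' => precedes a x y && chain xs' arcs'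
  | _, _ => false
  end.

Definition is_path (A : {set k.-tuple V})
    (p : seq V * seq (k.-tuple V)) : bool :=
  [&& chain p.1 p.2, uniq p.1, uniq p.2 & all (fun a => a \in A) p.2].

(* A path cover: a family of paths, pairwise vertex-disjoint (the
   concatenation of their vertex lists is duplicate-free), using distinct
   hyperarcs (the concatenation of their arc lists is duplicate-free),
   and covering all of V. *)
Definition path_cover (A : {set k.-tuple V})
    (P : seq (seq V * seq (k.-tuple V))) : Prop :=
  [/\ all (is_path A) P,
      uniq (flatten (map fst P)),
      uniq (flatten (map snd P)) &
      (forall v : V, v \in flatten (map fst P))].

Definition independent (A : {set k.-tuple V}) (I : {set V}) : bool :=
  [forall a in A, ~~ all (fun x => x \in I) a].

Definition alpha (A : {set k.-tuple V}) : nat :=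
  \max_(I : {set V} | independent A I) #|I|.

End Hyperdigraph.

From mathcomp Require Import all_boot.
Set Implicit Arguments. Unset Strict Implicit. Unset Printing Implicit Defensive.

(* The Gallai-Milgram argument, on the first vertices (heads) of the paths.
   A path cover with more than alpha(H) paths has a dependent set of heads,
   i.e. a hyperarc c all of whose vertices are heads; such a c is used by no
   path, and some vertex u precedes some vertex v in c.  If u is a trivial
   path, attach it in front of the path of v through c.  Otherwise the path
   of u starts u b y ...; delete u and b, and by induction on the number of
   vertices shrink the resulting cover of V - u (forbidding b and c) by one
   path, keeping its heads among the old ones.  Counting heads shows that y
   or v is still a head, so u can be put back in front of it through b or c. *)

Section PathCovers.
Variables (V : finType) (k : nat).
Notation arc := (k.-tuple V).
Notation hpath := (seq V * seq arc)%type.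
Implicit Types (B : {set arc}) (W I : {set V}) (xs : seq V) (ars : seq arc)
  (p : hpath) (P : seq hpath) (c : arc).

Definition vertices P := flatten (map fst P).
Definition arcs P := flatten (map snd P).
(* [take 1 p.1] is the first vertex of [p] as a list, so no default vertex is needed. *)
Definition heads P := flatten [seq take 1 p.1 | p <- P].

Definition path_cover_on B W P : Prop :=
  [/\ all (is_path B) P, uniq (vertices P), uniq (arcs P) & vertices P =i W].

Lemma vertices_cons xs ars P : vertices ((xs, ars) :: P) = xs ++ vertices P.
Proof. by []. Qed.

Lemma arcs_cons xs ars P : arcs ((xs, ars) :: P) = ars ++ arcs P.
Proof. by []. Qed.

Lemma heads_cons x xs ars P : heads ((x :: xs, ars) :: P) = x :: heads P.
Proof. by rewrite /heads /= take0. Qed.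

Lemma chain_nonnil xs ars : chain xs ars -> xs != [::].
Proof. by case: xs. Qed.

Lemma chain_cons2 x y xs a ars :
  chain [:: x, y & xs] (a :: ars) = precedes a x y && chain (y :: xs) ars.
Proof. by []. Qed.

Lemma chain_arc_behead xs ars c :
  chain xs ars -> c \in ars -> exists2 w, w \in c & w \in behead xs.
Proof.
elim: ars xs => // a ars IH [|x [|y xs]] //; rewrite chain_cons2 => /andP[/and3P[_ ya _] ch].
rewrite in_cons => /predU1P[->|/(IH _ ch)[w wc wxs]]; first by exists y; rewrite ?mem_head.
by exists w; rewrite // in_cons wxs orbT.
Qed.

Lemma heads_subseq P : subseq (heads P) (vertices P).
Proof. by elim: P => //= p P IH; apply: cat_subseq (take_subseq _ _) IH. Qed.

Lemma size_heads B P : all (is_path B) P -> size (heads P) = size P.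
Proof.
elim: P => //= -[xs ars] P IH /andP[/and4P[/chain_nonnil] + _ _ _ /IH].
by case: xs => // x xs _; rewrite heads_cons /= => ->.
Qed.

Lemma mem_headsP P z :
  reflect (exists xs ars rest, perm_eq P ((z :: xs, ars) :: rest)) (z \in heads P).
Proof.
apply: (iffP flatten_mapP) => [[[[|x xs] ars] pP] //=|[xs [ars [rest /perm_mem eP]]]].
  rewrite take0 mem_seq1 => /eqP zx; rewrite -zx in pP *.
  by exists xs, ars, (rem (z :: xs, ars) P); apply: perm_to_rem.
by exists (z :: xs, ars); rewrite ?eP ?mem_head //= take0 mem_head.
Qed.

Lemma perm_heads P P' : perm_eq P P' -> perm_eq (heads P) (heads P').
Proof. by move=> eP; apply/perm_flatten/perm_map. Qed.

Lemma perm_vertices P P' : perm_eq P P' -> perm_eq (vertices P) (vertices P').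
Proof. by move=> eP; apply/perm_flatten/perm_map. Qed.

Lemma perm_arcs P P' : perm_eq P P' -> perm_eq (arcs P) (arcs P').
Proof. by move=> eP; apply/perm_flatten/perm_map. Qed.

Lemma path_cover_on_perm B W P P' :
  perm_eq P P' -> path_cover_on B W P -> path_cover_on B W P'.
Proof.
move=> eP [pathsP uV uA covW]; have eV := perm_vertices eP.
split; first by rewrite -(perm_all _ eP).
- by rewrite -(perm_uniq eV).
- by rewrite -(perm_uniq (perm_arcs eP)).
- by move=> v; rewrite -(perm_mem eV).
Qed.

Lemma uniq_heads B W P : path_cover_on B W P -> uniq (heads P).
Proof. by case=> _ uV _ _; apply: subseq_uniq (heads_subseq P) uV. Qed.

Lemma arcs_path_cover_on B W P : path_cover_on B W P -> {subset arcs P <= B}.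
Proof.
case=> pathsP _ _ _ a /flatten_mapP[p pP ap].
by case/and4P: (allP pathsP p pP) => _ _ _ /allP; apply.
Qed.

Lemma path_cover_on_arcsS B B' W P :
  path_cover_on B W P -> {subset arcs P <= B'} -> path_cover_on B' W P.
Proof.
case=> pathsP uV uA covW sAB'; split=> //; apply/allP=> p pP.
case/and4P: (allP pathsP p pP) => ch up1 up2 _; rewrite /is_path ch up1 up2.
by apply/allP=> a ap; apply: sAB'; apply/flatten_mapP; exists p.
Qed.

Lemma is_path_cons2 B x y xs c ars :
  is_path B (x :: y :: xs, c :: ars) =
  [&& precedes c x y, x \notin y :: xs, c \notin ars, c \in B & is_path B (y :: xs, ars)].
Proof.
rewrite /is_path chain_cons2 [uniq (x :: _)]/= [uniq (c :: _)]/= [all _ (c :: _)]/=.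
by case: (precedes c x y) (chain _ _) (x \in y :: xs) (c \in ars) (c \in B)
  => [] [] [] [] []; rewrite /= ?andbF.
Qed.

Lemma path_cover_on_behead B W x y xs a ars P :
  path_cover_on B W ((x :: y :: xs, a :: ars) :: P) ->
  path_cover_on (B :\ a) (W :\ x) ((y :: xs, ars) :: P).
Proof.
case=> /andP[+ pathsP]; rewrite is_path_cons2 => /and5P[_ _ _ _ pathyxs].
rewrite !vertices_cons !arcs_cons => /andP[xV uV] /andP[aA uA] covW.
have cov : path_cover_on B (W :\ x) ((y :: xs, ars) :: P).
  split; rewrite ?vertices_cons ?arcs_cons //; first exact/andP.
  by move=> v; rewrite in_setD1 -covW [in RHS]in_cons; case: eqVneq => // ->; apply/negbTE.
apply: (path_cover_on_arcsS cov) => e eA.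
by rewrite in_setD1 (arcs_path_cover_on cov eA) andbT; apply: contraNneq aA => <-.
Qed.

Lemma path_cover_on_drop_trivial B W x ars P :
  path_cover_on B W (([:: x], ars) :: P) -> path_cover_on B (W :\ x) P.
Proof.
case=> /andP[_ pathsP]; rewrite !vertices_cons !arcs_cons /= => /andP[xV uV].
rewrite cat_uniq => /and3P[_ _ uA] covW; split=> // v.
by rewrite in_setD1 -covW [in RHS]in_cons; case: eqVneq => // ->; apply/negbTE.
Qed.

Lemma path_cover_on_cons B W x y xs c ars P :
  path_cover_on B W ((y :: xs, ars) :: P) -> x \notin W -> c \in B ->
  c \notin arcs ((y :: xs, ars) :: P) -> precedes c x y ->
  path_cover_on B (x |: W) ((x :: y :: xs, c :: ars) :: P).
Proof.
case=> /andP[pathyxs pathsP] uV uA covW xW cB cA cxy.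
have xV : x \notin vertices ((y :: xs, ars) :: P) by rewrite covW.
split.
- apply/andP; split=> //; rewrite is_path_cons2 cxy cB pathyxs andbT /=.
  by move: xV cA; rewrite vertices_cons arcs_cons !mem_cat !negb_or => /andP[-> _] /andP[-> _].
- by rewrite vertices_cons cat_cons -(vertices_cons _ ars) /= xV.
- by rewrite arcs_cons cat_cons -(arcs_cons (y :: xs)) /= cA.
- by move=> v; rewrite vertices_cons cat_cons -(vertices_cons _ ars) in_setU1 in_cons covW.
Qed.

Lemma path_cover_on_cons_head B W P x y c :
  path_cover_on B W P -> x \notin W -> c \in B -> c \notin arcs P ->
  y \in heads P -> precedes c x y ->
  exists2 P', path_cover_on B (x |: W) P' &
    size P' = size P /\ {subset heads P' <= x :: [seq h <- heads P | h != y]}.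
Proof.
move=> cov xW cB cA /mem_headsP[xs [ars [rest eP]]] cxy.
have eH := perm_heads eP.
have /andP[yrest _] : uniq (y :: heads rest).
  by rewrite -(heads_cons _ xs ars) -(perm_uniq eH) (uniq_heads cov).
exists ((x :: y :: xs, c :: ars) :: rest).
  apply: path_cover_on_cons (path_cover_on_perm eP cov) xW cB _ cxy.
  by rewrite -(perm_mem (perm_arcs eP)).
split=> [|h]; first by rewrite (perm_size eP).
rewrite heads_cons !in_cons mem_filter (perm_mem eH) heads_cons in_cons.
case/predU1P=> [->|hrest]; first by rewrite eqxx.
by rewrite hrest orbT andbT; apply/orP; right; apply: contraNneq yrest => <-.
Qed.

Lemma heads_notin_behead P x xs ars w :
  uniq (vertices P) -> (x :: xs, ars) \in P -> w \in xs -> w \notin heads P.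
Proof.
move=> uV pP wxs; have eP := perm_to_rem pP.
move: uV; rewrite (perm_uniq (perm_vertices eP)) (perm_mem (perm_heads eP)).
rewrite vertices_cons heads_cons cat_uniq cons_uniq => /and3P[/andP[xxs _] /hasPn disj _].
rewrite in_cons negb_or; apply/andP; split; first by apply: contraNneq xxs => <-.
by apply/negP=> /(mem_subseq (heads_subseq _)) /disj; rewrite in_cons wxs orbT.
Qed.

Lemma arc_of_heads_unused B W P c :
  path_cover_on B W P -> {subset c <= heads P} -> c \notin arcs P.
Proof.
move=> [pathsP uV _ _] cP; apply/flatten_mapP=> -[[xs ars] pP /= cars].
have /and4P[ch _ _ _] := allP pathsP _ pP.
have [w wc] := chain_arc_behead ch cars.
case: xs ch pP => // x xs _ pP /= wxs.
by have := cP w wc; apply/negP; apply: heads_notin_behead pP wxs.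
Qed.

Lemma independent_setD1 B I c x :
  x \in c -> x \notin I -> independent (B :\ c) I -> independent B I.
Proof.
move=> xc xI /forall_inP indI; apply/forall_inP=> a aB.
have [->|ac] := eqVneq a c; first by apply: contra xI => /allP; apply.
by apply: indI; rewrite in_setD1 ac.
Qed.

Lemma dependent_heads B W P m :
  path_cover_on B W P -> (forall I, I \subset W -> independent B I -> #|I| <= m) ->
  m < size P -> exists2 c, c \in B & {subset c <= heads P}.
Proof.
move=> cov bound ltmP; have [pathsP _ _ covW] := cov.
have headsW : [set x in heads P] \subset W.
  by apply/subsetP=> x; rewrite inE -covW; apply: mem_subseq (heads_subseq P) x.
have : ~~ independent B [set x in heads P].
  apply: contraTN ltmP => /(bound _ headsW).
  by rewrite cardsE (card_uniqP (uniq_heads cov)) (size_heads pathsP) -leqNgt.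
rewrite negb_forall_in => /exists_inP[c cB /negPn/allP cH].
by exists c => // x /cH; rewrite inE.
Qed.

Hypothesis k_gt1 : 1 < k.

Lemma precedes_exists c : uniq c -> exists u v, precedes c u v.
Proof.
rewrite /precedes !memtE; have := k_gt1; have := size_tuple c.
case: (tval c) => [|u [|v s]] <- // _ /andP[uvs _]; exists u, v.
by move: uvs; rewrite !in_cons negb_or !eqxx => /andP[/negbTE uv _] /=; rewrite eqxx uv orbT.
Qed.

Lemma path_cover_on_absorb_trivial B W u ars rest c v :
  path_cover_on B W (([:: u], ars) :: rest) -> c \in B -> c \notin arcs rest ->
  v \in heads rest -> precedes c u v ->
  exists2 P', path_cover_on B W P' &
    size P' = size rest /\ {subset heads P' <= u :: heads rest}.
Proof.
move=> cov cB cA vrest cuv.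
have uW : u \in W by have [_ _ _ <-] := cov; rewrite vertices_cons mem_head.
have uWu : u \notin W :\ u by rewrite in_setD1 eqxx.
have [P' cov' [szP' headsP']] :=
  path_cover_on_cons_head (path_cover_on_drop_trivial cov) uWu cB cA vrest cuv.
exists P'; first by rewrite setD1K in cov'.
by split=> // h /headsP'; rewrite !in_cons mem_filter; case: (h == u) => //= /andP[].
Qed.

Lemma path_cover_on_reattach B W P H u y v b c :
  path_cover_on (B :\ b :\ c) (W :\ u) P -> u \in W -> b \in B -> c \in B ->
  precedes b u y -> precedes c u v ->
  {subset heads P <= y :: H} -> v \in H -> size H <= size P ->
  exists2 P', path_cover_on B W P' &
    size P' = size P /\ {subset heads P' <= u :: H}.
Proof.
move=> cov uW bB cB buy cuv headsP vH szH; rewrite -(setD1K uW).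
have uWu : u \notin W :\ u by rewrite in_setD1 eqxx.
have arcsP := arcs_path_cover_on cov.
have bA : b \notin arcs P by apply/negP=> /arcsP; rewrite !in_setD1 eqxx andbF.
have cA : c \notin arcs P by apply/negP=> /arcsP; rewrite in_setD1 eqxx.
have {}cov : path_cover_on B (W :\ u) P.
  by apply: path_cover_on_arcsS cov _ => e /arcsP /setD1P[_ /setD1P[]].
have [yP|yP] := boolP (y \in heads P).
  have [P' cov' [szP' headsP']] := path_cover_on_cons_head cov uWu bB bA yP buy.
  exists P' => //; split=> // h /headsP'; rewrite !in_cons mem_filter.
  by case: (h == u) => //= /andP[hy /headsP]; rewrite in_cons (negbTE hy).
have headsH : {subset heads P <= H}.
  by move=> h hP; have := headsP h hP; rewrite in_cons => /predU1P[hy|//]; rewrite -hy hP in yP.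
have [vP|vP] := boolP (v \in heads P).
  have [P' cov' [szP' headsP']] := path_cover_on_cons_head cov uWu cB cA vP cuv.
  exists P' => //; split=> // h /headsP'; rewrite !in_cons mem_filter.
  by case: (h == u) => //= /andP[_ /headsH].
have [pathsP _ _ _] := cov.
have : size (v :: heads P) <= size H.
  apply: uniq_leq_size; first by rewrite /= vP (uniq_heads cov).
  by move=> h; rewrite in_cons => /predU1P[->|/headsH].
by rewrite /= (size_heads pathsP) ltnNge szH.
Qed.

Lemma path_cover_on_shrink B W P m :
  {in B, forall c, uniq c} ->
  (forall I, I \subset W -> independent B I -> #|I| <= m) ->
  path_cover_on B W P -> m < size P ->
  exists2 P', path_cover_on B W P' &
    size P' = (size P).-1 /\ {subset heads P' <= heads P}.
Proof.
have [n] := ubnP #|W|; elim: n => // n IH in B W P *; rewrite ltnS => leWn uniqB bound cov ltmP.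
have [c cB cH] := dependent_heads cov bound ltmP.
have [u [v cuv]] := precedes_exists (uniqB c cB).
have /and3P[uc vc _] := cuv.
have uv : u != v by apply: contraTneq cuv => ->; rewrite /precedes ltnn !andbF.
have cA := arc_of_heads_unused cov cH.
have /mem_headsP[xs [ars [rest eP]]] := cH u uc.
have headsE : heads P =i u :: heads rest.
  by move=> h; rewrite (perm_mem (perm_heads eP)) heads_cons.
have vrest : v \in heads rest by move: (cH v vc); rewrite headsE in_cons eq_sym (negbTE uv).
move: cA ltmP; rewrite (perm_mem (perm_arcs eP)) (perm_size eP) => cA ltmP.
have {}cov := path_cover_on_perm eP cov.
have uW : u \in W by have [_ _ _ <-] := cov; rewrite vertices_cons mem_head.
clear eP; case: xs => [|y xs] in cov cA ltmP *.
  have cArest : c \notin arcs rest by move: cA; rewrite arcs_cons mem_cat negb_or => /andP[].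
  have [P' cov' [szP' headsP']] := path_cover_on_absorb_trivial cov cB cArest vrest cuv.
  by exists P' => //; split=> // h /headsP'; rewrite headsE.
case: ars => [|b ars] in cov cA ltmP *; first by case: cov => /andP[/and4P[]].
have [/andP[+ /size_heads szrest] _ _ _] := cov.
rewrite is_path_cons2 => /and5P[buy _ _ bB _]; have /and3P[ub _ _] := buy.
have cov1 : path_cover_on (B :\ b :\ c) (W :\ u) ((y :: xs, ars) :: rest).
  have covb := path_cover_on_behead cov; apply: (path_cover_on_arcsS covb) => e eA.
  rewrite in_setD1 (arcs_path_cover_on covb eA) andbT; apply: contraNneq cA => <-.
  by move: eA; rewrite !arcs_cons /= in_cons => ->; rewrite orbT.
have bound1 I : I \subset W :\ u -> independent (B :\ b :\ c) I -> #|I| <= m.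
  move=> /subsetP IWu indI; have uI : u \notin I by apply/negP=> /IWu; rewrite in_setD1 eqxx.
  apply: bound; first by apply/subsetP=> x /IWu /setD1P[].
  exact: independent_setD1 ub uI (independent_setD1 uc uI indI).
have uniq1 : {in B :\ b :\ c, forall e : arc, uniq e}.
  by move=> e /setD1P[_ /setD1P[_ /uniqB]].
have ltWu : #|W :\ u| < n by move: leWn; rewrite (cardsD1 u W) uW.
have [P2 cov2 [szP2]] := IH _ _ _ ltWu uniq1 bound1 cov1 ltmP.
rewrite heads_cons => headsP2.
have szH : size (heads rest) <= size P2 by rewrite szP2 szrest.
have [P' cov' [szP' headsP']] := path_cover_on_reattach cov2 uW bB cB buy cuv headsP2 vrest szH.
by exists P' => //; split=> [|h /headsP']; rewrite ?szP' ?szP2 ?headsE.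
Qed.

Lemma path_cover_on_singletons B W : path_cover_on B W [seq ([:: x], [::]) | x <- enum W].
Proof.
have verticesE : vertices [seq ([:: x], [::] : seq arc) | x <- enum W] = enum W.
  by rewrite /vertices -map_comp flatten_seq1.
split; rewrite ?verticesE ?enum_uniq //; first by apply/allP=> _ /mapP[x _ ->].
  by rewrite /arcs -map_comp; elim: (enum W).
by move=> x; rewrite mem_enum.
Qed.

Theorem gallai_milgram B W m :
  {in B, forall c, uniq c} ->
  (forall I, I \subset W -> independent B I -> #|I| <= m) ->
  exists2 P, path_cover_on B W P & size P <= m.
Proof.
move=> uniqB bound; have := path_cover_on_singletons B W.
move: [seq _ | _ <- _] => P; have [n] := ubnP (size P); elim: n P => // n IH P.
rewrite ltnS => lePn cov; have [|ltmP] := leqP (size P) m; first by exists P.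
have [P' cov' [szP' _]] := path_cover_on_shrink uniqB bound cov ltmP.
by apply: IH cov'; rewrite szP' prednK ?(leq_ltn_trans _ ltmP).
Qed.

End PathCovers.

Theorem theorem8 (V : finType) (k : nat) (A : {set k.-tuple V}) :
  khyperdigraph A ->
  exists P : seq (seq V * seq (k.-tuple V)),
    path_cover A P /\ size P <= alpha A.
Proof.
case=> k_gt1 _ uniqA _.
have bound (I : {set V}) : I \subset [set: V] -> independent A I -> #|I| <= alpha A.
  by move=> _ indI; apply: leq_bigmax_cond.
have [P [pathsP uV uA covV] sizeP] := gallai_milgram k_gt1 uniqA bound.
by exists P; split=> //; split=> // v; rewrite covV inE.
Qed.
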